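(* Let $p=(p_1,\dots,p_n)$ be a sequence of positive integers with $\min_i p_i=2$, and let $I=\{i\in[n]: p_i=2\}$. For a set $W$ of functions $I\to[2]$ define $$A_W=\{x\in S_p:\ \exists f\in W \text{ with } x_i=f(i)\ \forall i\in I\},\qquad B_W=\{y\in S_p:\ \nexists f\in W \text{ with } y_i\ne f(i)\ \forall i\in I\}.$$ Then every cross-intersecting pair $A,B\subseteq S_p$ satisfies $|A|+|B|\le|S_p|$ and $|A|\cdot|B|\le|S_p|^2/4$; and a cross-intersecting pair $(A,B)$ satisfies $|A|\cdot|B|=|S_p|^2/4$ if and only if $A=A_W$ and $B=B_W$ for some set $W$ of functions $I\to[2]$ with $|W|=2^{|I|-1}$.
   Context: $[m]=\{1,\dots,m\}$. For a sequence of positive integers $p=(p_1,\dots,p_n)$, $S_p=[p_1]\times\cdots\times[p_n]$. Two vectors $x,y\in S_p$ intersect if $x_i=y_i$ for some $i\in[n]$; families $A,B\subseteq S_p$ are cross-intersecting if every $x\in A$ and $y\in B$ intersect. *)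

From mathcomp Require Import all_boot.
Set Implicit Arguments. Unset Strict Implicit. Unset Printing Implicit Defensive.

(* Coordinates are 0-based: [m] = {1..m} is encoded as {0..m-1}.
   Vectors of S_p are encoded as finite functions 'I_n -> 'I_M with
   M = max_i p_i, and S_p is the subset of those with x i < p i. *)
Definition Mp (n : nat) (p : 'I_n -> nat) : nat := \max_(i < n) p i.

Definition Sp (n : nat) (p : 'I_n -> nat) : {set {ffun 'I_n -> 'I_(Mp p)}} :=
  [set x : {ffun 'I_n -> 'I_(Mp p)} | [forall i : 'I_n, x i < p i]].

Definition intersect (n m : nat) (x y : {ffun 'I_n -> 'I_m}) : Prop :=
  exists i, x i = y i.

Definition cross_intersecting (n m : nat) (A B : {set {ffun 'I_n -> 'I_m}}) : Prop :=
  forall x y, x \in A -> y \in B -> intersect x y.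

Definition Iset (n : nat) (p : 'I_n -> nat) : {set 'I_n} := [set i | p i == 2].

Definition A_W (n : nat) (p : 'I_n -> nat)
  (W : {set {ffun {i : 'I_n | p i == 2} -> 'I_2}}) : {set {ffun 'I_n -> 'I_(Mp p)}} :=
  [set x in Sp p | [exists f in W, [forall j : {i : 'I_n | p i == 2}, val (x (val j)) == val (f j)]]].

Definition B_W (n : nat) (p : 'I_n -> nat)
  (W : {set {ffun {i : 'I_n | p i == 2} -> 'I_2}}) : {set {ffun 'I_n -> 'I_(Mp p)}} :=
  [set y in Sp p | ~~ [exists f in W, [forall j : {i : 'I_n | p i == 2}, val (y (val j)) != val (f j)]]].

From mathcomp Require Import all_boot zify.
Set Implicit Arguments. Unset Strict Implicit. Unset Printing Implicit Defensive.

(* If s_i is nonzero mod p_i for every i, then y |-> y + s (coordinatewise mod p_i) is a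
   bijection of S_p that changes every coordinate, so it maps B into S_p \ A.  Hence
   |A| + |B| <= |S_p|, and AM-GM gives the product bound.  Equality in the product bound
   forces |A| + |B| = |S_p| and |A| = |B|, and then y \in B iff y + s \notin A for every such s.
   If x and x' agree on I, some y differs from both in every coordinate (a third symbol
   exists wherever p_i >= 3), and x = y + s, x' = y + s' for admissible s, s'; so
   x \in A iff y \notin B iff x' \in A.  Thus A = A_W for the set W of restrictions of A
   to I, and the shift by 1, which flips every coordinate in I, gives B = B_W.  All fibres
   of the restriction map have the same size, whence |W| = 2^(|I|-1). *)

Section Shift.

Variables (n : nat) (p : 'I_n -> nat).
Hypothesis p_gt0 : forall i, 0 < p i.

Local Notation vec := {ffun 'I_n -> 'I_(Mp p)}.

Lemma p_le_Mp i : p i <= Mp p.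
Proof. exact: (leq_bigmax i). Qed.

Lemma in_SpP (x : vec) : reflect (forall i, x i < p i) (x \in Sp p).
Proof. by rewrite inE; apply: forallP. Qed.

Lemma card_Sp_gt0 : 0 < #|Sp p|.
Proof.
apply/card_gt0P; exists [ffun i => Ordinal (leq_trans (p_gt0 i) (p_le_Mp i))].
by apply/in_SpP => i; rewrite ffunE.
Qed.

Definition shift (s : 'I_n -> nat) (y : vec) : vec :=
  [ffun i => insubd (y i) ((y i + s i) %% p i)].

Lemma val_shift s y i : val (shift s y i) = (y i + s i) %% p i.
Proof. by rewrite ffunE val_insubd (leq_trans (ltn_pmod _ (p_gt0 i)) (p_le_Mp i)). Qed.

Lemma shift_in_Sp s y : shift s y \in Sp p.
Proof. by apply/in_SpP => i; rewrite val_shift ltn_pmod. Qed.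

Lemma shift_inj s : {in Sp p &, injective (shift s)}.
Proof.
move=> x y /in_SpP ltx /in_SpP lty /(congr1 (fun z : vec => val (z _))) exy.
apply/ffunP => i; apply: val_inj; have /eqP := exy i.
by rewrite !val_shift eqn_modDr !modn_small // => /eqP.
Qed.

Definition nonzero_shift (s : 'I_n -> nat) := forall i, s i %% p i != 0.

Lemma shift_neq s y i : nonzero_shift s -> y \in Sp p -> shift s y i != y i.
Proof.
move=> s_nz /in_SpP lty; apply: contra (s_nz i) => /eqP/(congr1 val).
rewrite val_shift => ys_y.
have : y i + s i == y i + 0 %[mod p i] by rewrite ys_y addn0 modn_small.
by rewrite eqn_modDl mod0n.
Qed.

Lemma shift_onto x y : x \in Sp p -> y \in Sp p -> (forall i, x i != y i) ->
  exists2 s, nonzero_shift s & shift s y = x.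
Proof.
move=> /in_SpP ltx /in_SpP lty neq_xy.
pose s i := x i + (p i - y i).
have ys_mod i : (y i + s i) %% p i = x i.
  have -> : y i + s i = x i + p i by rewrite /s addnCA subnKC // ltnW.
  by rewrite modnDr modn_small.
exists s => [i | ]; last by apply/ffunP => i; apply: val_inj; rewrite val_shift.
apply: contra (neq_xy i) => /eqP s0; apply/eqP/val_inj => /=.
by rewrite -ys_mod -modnDmr s0 addn0 modn_small.
Qed.

Section CrossIntersecting.

Variables (A B : {set vec}).
Hypotheses (sub_A : A \subset Sp p) (sub_B : B \subset Sp p).
Hypothesis AB_cross : cross_intersecting A B.

Lemma card_shift_imset s : #|shift s @: B| = #|B|.
Proof. exact/card_in_imset/(sub_in2 (subsetP sub_B))/shift_inj. Qed.

Lemma shift_notin_cross s y : nonzero_shift s -> y \in B -> shift s y \notin A.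
Proof.
move=> s_nz yB; apply/negP => /AB_cross/(_ yB) [i eq_i].
by have := shift_neq i s_nz (subsetP sub_B _ yB); rewrite eq_i eqxx.
Qed.

Lemma shift_cross_sub s : nonzero_shift s -> shift s @: B \subset Sp p :\: A.
Proof.
move=> s_nz; apply/subsetP => _ /imsetP [y yB ->].
by rewrite in_setD shift_in_Sp shift_notin_cross.
Qed.

Lemma cross_card_le s : nonzero_shift s -> #|A| + #|B| <= #|Sp p|.
Proof.
move=> s_nz; rewrite -leq_subRL ?subset_leq_card // -cardsDS //.
by rewrite -(card_shift_imset s) subset_leq_card ?shift_cross_sub.
Qed.

Lemma cross_tight_mem s y : nonzero_shift s -> #|A| + #|B| = #|Sp p| ->
  y \in Sp p -> (y \in B) = (shift s y \notin A).
Proof.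
move=> s_nz tight yS; apply/idP/idP => [| syA]; first exact: shift_notin_cross.
have image_B : shift s @: B = Sp p :\: A.
  apply/eqP; rewrite eqEcard shift_cross_sub // card_shift_imset.
  by rewrite cardsDS // -tight addKn leqnn.
have : shift s y \in shift s @: B by rewrite image_B in_setD syA shift_in_Sp.
by case/imsetP => w wB /(shift_inj yS (subsetP sub_B _ wB)) ->.
Qed.

End CrossIntersecting.

End Shift.

Section Restriction.

Variables (n : nat) (p : 'I_n -> nat).

Local Notation vec := {ffun 'I_n -> 'I_(Mp p)}.
Local Notation Ivec := {ffun {i : 'I_n | p i == 2} -> 'I_2}.

Definition restrI (x : vec) : Ivec := [ffun j => inord (x (val j))].

Lemma val_restrI x j : x \in Sp p -> val (restrI x j) = x (val j).
Proof.
move=> /in_SpP ltx; rewrite ffunE /= inordK //.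
by have := ltx (val j); rewrite (eqP (valP j)).
Qed.

Lemma restrI_eq_coord x x' i : x \in Sp p -> x' \in Sp p ->
  restrI x = restrI x' -> p i = 2 -> x i = x' i.
Proof.
move=> xS x'S eq_xx' /eqP pi2; apply: val_inj.
have := val_restrI (Sub i pi2) xS; rewrite eq_xx' val_restrI //= => ->.
Qed.

Definition overwriteI (g : Ivec) (x : vec) : vec :=
  [ffun i => if insub i is Some j then insubd (x i) (val (g j)) else x i].

Lemma val_overwriteI g x j : val (overwriteI g x (val j)) = val (g j).
Proof.
rewrite ffunE valK val_insubd (leq_trans (ltn_ord (g j))) //.
by rewrite -(eqP (valP j)) p_le_Mp.
Qed.

Lemma overwriteI_out g x i : p i != 2 -> overwriteI g x i = x i.
Proof. by move=> pi_neq2; rewrite ffunE insubN. Qed.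

Lemma overwriteI_in_Sp g x : x \in Sp p -> overwriteI g x \in Sp p.
Proof.
move=> /in_SpP ltx; apply/in_SpP => i.
have [pi2 | /overwriteI_out ->] := boolP (p i == 2).
  by have /= -> := val_overwriteI g x (Sub i pi2); rewrite (eqP pi2).
exact: ltx.
Qed.

Lemma restrI_overwriteI g x : x \in Sp p -> restrI (overwriteI g x) = g.
Proof.
move=> xS; apply/ffunP => j; apply: val_inj.
by rewrite val_restrI ?overwriteI_in_Sp ?val_overwriteI.
Qed.

Definition fiber (g : Ivec) := [set x in Sp p | restrI x == g].

Lemma in_fiber x g : (x \in fiber g) = (x \in Sp p) && (restrI x == g).
Proof. by rewrite in_set. Qed.

Lemma card_fiber_le f g : #|fiber f| <= #|fiber g|.
Proof.
have overwrite_inj : {in fiber f &, injective (overwriteI g)}.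
  move=> x x'; rewrite !in_fiber => /andP [xS /eqP rx] /andP [x'S /eqP rx'] eq_xx'.
  apply/ffunP => i; have [pi2 | pi_neq2] := eqVneq (p i) 2.
    by apply: (restrI_eq_coord xS x'S); rewrite ?rx ?rx'.
  by rewrite -(overwriteI_out g x pi_neq2) eq_xx' overwriteI_out.
rewrite -(card_in_imset overwrite_inj); apply/subset_leq_card/subsetP.
move=> _ /imsetP [x + ->]; rewrite in_fiber => /andP [xS _].
by rewrite in_fiber overwriteI_in_Sp ?restrI_overwriteI ?eqxx.
Qed.

Lemma card_fiber f g : #|fiber f| = #|fiber g|.
Proof. by apply/eqP; rewrite eqn_leq !card_fiber_le. Qed.

Definition cylinder (V : {set Ivec}) := [set x in Sp p | restrI x \in V].

Lemma in_cylinder x V : (x \in cylinder V) = (x \in Sp p) && (restrI x \in V).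
Proof. by rewrite in_set. Qed.

Lemma card_cylinder V g : #|cylinder V| = #|V| * #|fiber g|.
Proof.
rewrite -sum1_card (partition_big restrI (mem V)) /=; last first.
  by move=> x /[!in_cylinder] /andP [].
rewrite -sum_nat_const; apply: eq_bigr => f fV.
rewrite sum1_card (card_fiber g f); apply: eq_card => x.
rewrite -topredE /= in_cylinder in_fiber.
by case: eqP => [->|]; rewrite ?fV ?andbT ?andbF.
Qed.

Lemma card_Ivec : #|{: Ivec}| = 2 ^ #|Iset p|.
Proof.
rewrite card_ffun card_ord card_sig.
by congr (2 ^ _); apply: eq_card => i; rewrite !inE.
Qed.

Lemma card_Sp g : #|Sp p| = 2 ^ #|Iset p| * #|fiber g|.
Proof.
have -> : Sp p = cylinder setT by apply/setP => x; rewrite in_cylinder in_setT andbT.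
by rewrite (card_cylinder _ g) cardsT card_Ivec.
Qed.

Definition flipI (g : Ivec) : Ivec := [ffun j => inord (1 - g j)].

Lemma val_flipI g j : val (flipI g j) = 1 - g j.
Proof. by rewrite ffunE /= inordK // ltnS leq_subr. Qed.

Lemma flipIK : involutive flipI.
Proof.
move=> g; apply/ffunP => j; apply: val_inj.
by rewrite !val_flipI; case: (g j) => [[|[|k]] ?].
Qed.

Lemma forall_neq_flipI (f g : Ivec) :
  [forall j, val (g j) != val (f j)] = (g == flipI f).
Proof.
apply/forallP/eqP => [neq_gf | -> j].
  apply/ffunP => j; apply: val_inj; rewrite val_flipI.
  by move: (neq_gf j); case: (g j) (f j) => [[|[|a]] ?] [[|[|b]] ?].
by rewrite val_flipI; case: (f j) => [[|[|k]] ?].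
Qed.

Lemma exists_neq_flipI (W : {set Ivec}) (g : Ivec) :
  [exists f in W, [forall j, val (g j) != val (f j)]] = (flipI g \in W).
Proof.
apply/existsP/idP => [[f /andP [fW]] | gW].
  by rewrite forall_neq_flipI => /eqP ->; rewrite flipIK.
by exists (flipI g); rewrite gW forall_neq_flipI flipIK eqxx.
Qed.

Lemma A_W_cylinder W : A_W W = cylinder W.
Proof.
apply/setP => x; rewrite in_cylinder in_set; case: (boolP (x \in Sp p)) => //= xS.
apply/existsP/idP => [[f /andP [fW /forallP eq_xf]] | rxW]; last first.
  by exists (restrI x); rewrite rxW; apply/forallP => j; rewrite val_restrI.
suff -> : restrI x = f by [].
by apply/ffunP => j; apply: val_inj; rewrite val_restrI //; apply/eqP/eq_xf.
Qed.

Lemma B_W_cylinder W : B_W W = cylinder (~: (flipI @^-1: W)).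
Proof.
apply/setP => y; rewrite in_cylinder in_set; case: (boolP (y \in Sp p)) => //= yS.
rewrite !inE -exists_neq_flipI; congr negb; apply: eq_existsb => f.
by congr andb; apply: eq_forallb => j; rewrite val_restrI.
Qed.

Lemma card_A_W (W : {set Ivec}) g : #|A_W W| = #|W| * #|fiber g|.
Proof. by rewrite A_W_cylinder (card_cylinder _ g). Qed.

Lemma card_B_W (W : {set Ivec}) g : #|B_W W| = (2 ^ #|Iset p| - #|W|) * #|fiber g|.
Proof.
rewrite B_W_cylinder (card_cylinder _ g) -card_Ivec -(cardsC (flipI @^-1: W)).
by rewrite card_preimset ?addKn //; apply: can_inj flipIK.
Qed.

End Restriction.

Definition third (a b : nat) : nat :=
  if (a != 0) && (b != 0) then 0 else if (a != 1) && (b != 1) then 1 else 2.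

Lemma third_spec a b q : a < q -> b < q -> 2 <= q -> (q = 2 -> a = b) ->
  [/\ third a b < q, third a b != a & third a b != b].
Proof.
rewrite /third => ltaq ltbq le2q eq_ab.
by case: eqP => ?; case: eqP => ?; case: eqP => ?; case: eqP => ? /=;
  split; try apply/eqP; lia.
Qed.

Section Tight.

Variables (n : nat) (p : 'I_n -> nat).
Hypothesis p_ge2 : forall i, 2 <= p i.

Local Notation vec := {ffun 'I_n -> 'I_(Mp p)}.

Let p_gt0 i : 0 < p i := ltnW (p_ge2 i).

Lemma shift1_nonzero : nonzero_shift p (fun=> 1).
Proof. by move=> i; rewrite modn_small. Qed.

Lemma cross_tight_cylinder (A B : {set vec}) x x' :
    A \subset Sp p -> B \subset Sp p -> cross_intersecting A B ->
    #|A| + #|B| = #|Sp p| -> x \in Sp p -> x' \in Sp p ->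
  (forall i, p i = 2 -> x i = x' i) -> x \in A -> x' \in A.
Proof.
move=> sub_A sub_B AB_cross tight xS x'S eq_xx' xA.
have /in_SpP ltx := xS; have /in_SpP ltx' := x'S.
have y_spec i := third_spec (ltx i) (ltx' i) (p_ge2 i) (fun e => congr1 val (eq_xx' i e)).
pose y : vec := [ffun i => insubd (x i) (third (x i) (x' i))].
have val_y i : val (y i) = third (x i) (x' i).
  rewrite ffunE val_insubd; case: (y_spec i) => lt_q _ _.
  by rewrite (leq_trans lt_q (p_le_Mp p i)).
have yS : y \in Sp p by apply/in_SpP => i; rewrite val_y; case: (y_spec i).
have shift_y_in_A t : nonzero_shift p t -> (shift t y \in A) = (y \notin B).
  by move=> t_nz; rewrite (cross_tight_mem p_gt0 sub_A sub_B AB_cross t_nz tight yS) negbK.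
move: xA; have [s s_nz <-] : exists2 s, nonzero_shift p s & shift s y = x.
  by apply: (shift_onto p_gt0) => // i; rewrite -val_eqE val_y eq_sym; case: (y_spec i).
have [s' s'_nz <-] : exists2 s, nonzero_shift p s & shift s y = x'.
  by apply: (shift_onto p_gt0) => // i; rewrite -val_eqE val_y eq_sym; case: (y_spec i).
by rewrite !shift_y_in_A.
Qed.

Lemma restrI_shift1 y : y \in Sp p -> restrI (shift (fun=> 1) y) = flipI (restrI y).
Proof.
move=> yS; apply/ffunP => j; apply: val_inj.
rewrite val_restrI ?(shift_in_Sp p_gt0) // (val_shift p_gt0) val_flipI val_restrI //.
rewrite (eqP (valP j)).
by have /in_SpP/(_ (val j)) := yS; rewrite (eqP (valP j)); case: (y (val j)) => [[|[|k]] ?].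
Qed.

Lemma cross_tight_A_W_B_W (A B : {set vec}) :
    A \subset Sp p -> B \subset Sp p -> cross_intersecting A B ->
    #|A| + #|B| = #|Sp p| ->
  A = A_W ([set restrI x | x in A]) /\ B = B_W ([set restrI x | x in A]).
Proof.
move=> sub_A sub_B AB_cross tight; set W := [set restrI x | x in A].
have A_cyl : A = cylinder W.
  apply/setP => x; rewrite in_cylinder; apply/idP/andP => [xA | [xS /imsetP [x' x'A rx]]].
    by rewrite (subsetP sub_A _ xA) imset_f.
  have x'S := subsetP sub_A _ x'A.
  apply: (cross_tight_cylinder sub_A sub_B AB_cross tight x'S xS _ x'A) => i.
  exact: restrI_eq_coord.
split; first by rewrite A_W_cylinder.
apply/setP => y; rewrite B_W_cylinder in_cylinder.
case: (boolP (y \in Sp p)) => /= [yS | yNS]; last by apply: contraNF yNS; apply/subsetP.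
rewrite (cross_tight_mem p_gt0 sub_A sub_B AB_cross shift1_nonzero tight yS) {1}A_cyl.
by rewrite in_cylinder (shift_in_Sp p_gt0) restrI_shift1 // in_setC inE.
Qed.

End Tight.

Lemma AGM2_le a b s : a + b <= s -> 4 * (a * b) <= s ^ 2.
Proof. by move=> le_s; rewrite (leq_trans (nat_AGM2 a b)) // leq_sqr. Qed.

Lemma AGM2_eq a b s : a + b <= s -> 4 * (a * b) = s ^ 2 <-> a + b = s /\ a = b.
Proof.
move=> le_s; split=> [eq_4ab | [<- <-]]; last first.
  by apply/eqP; rewrite (eq_leqif (nat_AGM2 a a)).
have agm := nat_AGM2 a b.
have eq_sq : (a + b) ^ 2 = s ^ 2.
  by apply/eqP; rewrite eqn_leq leq_sqr le_s -eq_4ab agm.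
by split; [exact: sqrn_inj | apply/eqP; rewrite -(eq_leqif agm) eq_4ab eq_sq].
Qed.

Theorem mainTheorem12 (n : nat) (p : 'I_n -> nat)
  (hpos : forall i, 0 < p i)
  (hmin2 : forall i, 2 <= p i)
  (hex2 : exists i, p i = 2) :
  (forall A B : {set {ffun 'I_n -> 'I_(Mp p)}},
     A \subset Sp p -> B \subset Sp p -> cross_intersecting A B ->
     #|A| + #|B| <= #|Sp p| /\ 4 * (#|A| * #|B|) <= #|Sp p| ^ 2) /\
  (forall A B : {set {ffun 'I_n -> 'I_(Mp p)}},
     A \subset Sp p -> B \subset Sp p -> cross_intersecting A B ->
     (4 * (#|A| * #|B|) = #|Sp p| ^ 2 <->
      exists W : {set {ffun {i : 'I_n | p i == 2} -> 'I_2}},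
        #|W| = 2 ^ (#|Iset p| - 1) /\ A = A_W W /\ B = B_W W)).
Proof.
have [i0 p_i0] := hex2.
pose g0 : {ffun {i : 'I_n | p i == 2} -> 'I_2} := [ffun=> ord0].
set h := 2 ^ (#|Iset p| - 1); set c := #|fiber g0|.
have double_h : 2 ^ #|Iset p| = 2 * h.
  have Iset_gt0 : 0 < #|Iset p| by apply/card_gt0P; exists i0; rewrite inE p_i0.
  by rewrite -expnS subn1 prednK.
have card_S : #|Sp p| = 2 * (h * c) by rewrite (card_Sp g0) double_h mulnA.
have c_gt0 : 0 < c.
  by have := card_Sp_gt0 hpos; rewrite card_S !muln_gt0 => /andP [_ /andP []].
split=> A B sub_A sub_B AB_cross.
all: have le_S := cross_card_le hpos sub_A sub_B AB_cross (shift1_nonzero hmin2).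
  by split=> //; apply: AGM2_le.
rewrite AGM2_eq //; split=> [[tight eq_AB] | [W [card_W [-> ->]]]].
  have [eq_A eq_B] := cross_tight_A_W_B_W hmin2 sub_A sub_B AB_cross tight.
  exists [set restrI x | x in A]; split=> //.
  apply/eqP; rewrite -(eqn_pmul2r c_gt0) -(eqn_pmul2l (isT : 0 < 2)) -(card_A_W _ g0) -eq_A.
  by rewrite mul2n -addnn {2}eq_AB tight card_S eqxx.
rewrite (card_A_W _ g0) (card_B_W _ g0) double_h card_W card_S.
by rewrite mul2n -addnn addnK -/c addnn mul2n.
Qed.
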